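(* Let $I$ be a set, $P_i$ ($i\in I$) pastures, and $\bigotimes_{i\in I}P_i$ with $i_j:P_j\to\bigotimes_{i\in I}P_i$ as described in the context. If $P$ is a pasture and $f_i:P_i\to P$ is a morphism of pastures for each $i\in I$, then there exists a unique morphism $g:\bigotimes_{i\in I}P_i\to P$ such that $f_j=g\circ i_j$ for each $j\in I$.
   Context: A pasture is a multiplicative monoid $P$ with a zero element $0$ (absorbing) such that $P^\times=P\setminus\{0\}$ is an abelian group, together with an involution $x\mapsto -x$ fixing $0$, and a subset $N_P\subseteq P^3$ (write $a+b+c=0$ for $(a,b,c)\in N_P$) such that: (1) $N_P$ is invariant under permutations; (2) if $a+b+c=0$ then $da+db+dc=0$ for all $d\in P$; (3) $a+b+0=0$ iff $a=-b$. A morphism of pastures is a multiplicative map $f$ with $f(0)=0$, $f(1)=1$, $f(-a)=-f(a)$, preserving nullsets. The coproduct: let $\bigoplus_{i\in I}P_i^\times$ be the set of families $(x_i)_{i\in I}$ with $x_i\in P_i^\times$ and $x_i=1_i$ for all but finitely many $i$. Define $(x_i)\sim(y_i)$ iff there is a finite set of indices of even cardinality on which $x_i=-y_i$, with $x_i=y_i$ at all other indices. Set $\bigotimes_{i\in I}P_i=\{0\}\cup(\bigoplus_{i\in I}P_i^\times/\sim)$, classes written $[(x_i)_{i\in I}]$. Multiplication: $0$ absorbing, $[(x_i)][(y_i)]=[(x_iy_i)]$. Involution: $-0=0$ and $-[(x_i)]=[(y_i)]$ where $y_j=-x_j$ for one chosen index $j$ and $y_i=x_i$ for $i\neq j$.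 Nullset: for nonzero elements, $[(x_i)]+[(y_i)]+[(z_i)]=0$ iff there are representatives $(x_i'),(y_i'),(z_i')$ of these classes and an index $j$ with $x'_j+y'_j+z'_j=0$ in $P_j$ and $x'_i=y'_i=z'_i$ for all $i\neq j$; relations involving $0$ are the permutations of $u+v+0=0$ iff $u=-v$. This is a pasture. The maps: $i_j(0)=0$ and $i_j(x)=[(y_i)_{i\in I}]$ with $y_j=x$ and $y_i=1_i$ for $i\neq j$. *)

From Stdlib Require Import List Classical ClassicalEpsilon PeanoNat.
Import ListNotations.
Set Implicit Arguments.

(* Underlying data of a pasture: carrier, 0, 1, multiplication,
   involution x |-> -x, and the nullset N_P (null a b c  means  a+b+c=0). *)
Record pops := POps {
  car :> Type;
  pzero : car;
  pone : car;
  pmul : car -> car -> car;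
  pneg : car -> car;
  pnull : car -> car -> car -> Prop }.

Arguments pzero {p}.
Arguments pone {p}.
Arguments pmul {p}.
Arguments pneg {p}.
Arguments pnull {p}.

Definition is_pasture (P : pops) : Prop :=
  (forall a b c : P, pmul a (pmul b c) = pmul (pmul a b) c) /\
  (forall a b : P, pmul a b = pmul b a) /\
  (forall a : P, pmul pone a = a) /\
  (forall a : P, pmul pzero a = pzero) /\
  (@pone P <> pzero) /\
  (forall a b : P, a <> pzero -> b <> pzero -> pmul a b <> pzero) /\
  (forall a : P, a <> pzero -> exists b, pmul a b = pone) /\
  (forall a : P, pneg (pneg a) = a) /\
  (pneg (@pzero P) = pzero) /\
  (forall a b c : P, pnull a b c ->
     pnull a c b /\ pnull b a c /\ pnull b c a /\ pnull c a b /\ pnull c b a) /\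
  (forall a b c d : P, pnull a b c -> pnull (pmul d a) (pmul d b) (pmul d c)) /\
  (forall a b : P, pnull a b pzero <-> a = pneg b).

Record pasture := Pasture { pops_of :> pops; pasture_ax : is_pasture pops_of }.

Definition is_morphism (P Q : pops) (f : P -> Q) : Prop :=
  f pzero = pzero /\ f pone = pone /\
  (forall a b, f (pmul a b) = pmul (f a) (f b)) /\
  (forall a, f (pneg a) = pneg (f a)) /\
  (forall a b c, pnull a b c -> pnull (f a) (f b) (f c)).

Section Facts.
Variable P : pasture.

Lemma p_mul_nz (a b : P) : a <> pzero -> b <> pzero -> pmul a b <> pzero.
Proof. destruct (pasture_ax P) as (_&_&_&_&_&H&_). apply H. Qed.

Lemma p_one_nz : @pone P <> pzero.
Proof. destruct (pasture_ax P) as (_&_&_&_&H&_). exact H. Qed.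

Lemma p_one_mul (a : P) : pmul pone a = a.
Proof. destruct (pasture_ax P) as (_&_&H&_). apply H. Qed.

Lemma p_neg_nz (a : P) : a <> pzero -> pneg a <> pzero.
Proof.
  destruct (pasture_ax P) as (_&_&_&_&_&_&_&Hn&H0&_).
  intros Ha E. apply Ha. rewrite <- (Hn a), E. exact H0.
Qed.
End Facts.

Section Coprod.
Variable I : Type.
Variable P : I -> pasture.
Variable j0 : I. (* the index used to define the involution; I is nonempty *)

Definition idec (i j : I) : {i = j} + {i <> j} := excluded_middle_informative _.

Definition rawfam := forall i : I, P i.

Definition good (x : rawfam) : Prop :=
  (forall i, x i <> pzero) /\
  exists l : list I, forall i, x i <> pone -> In i l.

Definition fam := { x : rawfam | good x }.

Definition fam_equiv (x y : fam) : Prop :=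
  exists S : list I, NoDup S /\ Nat.Even (length S) /\
    (forall i, In i S -> proj1_sig x i = pneg (proj1_sig y i)) /\
    (forall i, ~ In i S -> proj1_sig x i = proj1_sig y i).

Definition ncar := { C : fam -> Prop | exists x, forall y, C y <-> fam_equiv x y }.

Definition cls (x : fam) : ncar :=
  exist _ (fam_equiv x) (ex_intro _ x (fun y => iff_refl _)).

Definition rep (C : ncar) : fam :=
  proj1_sig (constructive_indefinite_description _ (proj2_sig C)).

Lemma good_one : good (fun i => pone).
Proof.
  split. intro i. apply p_one_nz. exists []. intros i H. now elim H.
Qed.
Definition fam_one : fam := exist _ _ good_one.

Lemma good_mul (x y : fam) : good (fun i => pmul (proj1_sig x i) (proj1_sig y i)).
Proof.
  destruct x as [x [Hx [lx Lx]]], y as [y [Hy [ly Ly]]]; simpl. split.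
  - intro i. apply p_mul_nz; auto.
  - exists (lx ++ ly). intros i Hi. apply in_or_app.
    destruct (classic (x i = pone)) as [E|E]; [|left; auto].
    right. apply Ly. intro F. apply Hi. rewrite E, F. apply p_one_mul.
Qed.
Definition fam_mul (x y : fam) : fam := exist _ _ (good_mul x y).

Definition flipraw (x : fam) : rawfam := fun i =>
  match idec i j0 with
  | left _ => pneg (proj1_sig x i)
  | right _ => proj1_sig x i
  end.

Lemma good_flip (x : fam) : good (flipraw x).
Proof.
  destruct x as [x [Hx [lx Lx]]]; unfold flipraw; simpl. split.
  - intro i. destruct (idec i j0); [apply p_neg_nz|]; auto.
  - exists (j0 :: lx). intros i Hi. destruct (idec i j0) as [e|n].
    + left; auto.
    + right; auto.
Qed.
Definition fam_flip (x : fam) : fam := exist _ _ (good_flip x).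

(* operations of the coproduct; None plays the role of 0 *)
Definition Ccar := option ncar.

Definition cmul (A B : Ccar) : Ccar :=
  match A, B with
  | Some a, Some b => Some (cls (fam_mul (rep a) (rep b)))
  | _, _ => None
  end.

Definition cneg (A : Ccar) : Ccar :=
  match A with
  | Some a => Some (cls (fam_flip (rep a)))
  | None => None
  end.

Definition cnull (A B C : Ccar) : Prop :=
  match A, B, C with
  | Some a, Some b, Some c =>
      exists x y z : fam,
        proj1_sig a x /\ proj1_sig b y /\ proj1_sig c z /\
        exists j : I,
          pnull (proj1_sig x j) (proj1_sig y j) (proj1_sig z j) /\
          forall i, i <> j -> proj1_sig x i = proj1_sig y i /\
                              proj1_sig y i = proj1_sig z i
  | _, _, _ =>
      (C = None /\ A = cneg B) \/ (B = None /\ A = cneg C) \/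
      (A = None /\ B = cneg C)
  end.

Definition coprod : pops := POps None (Some (cls fam_one)) cmul cneg cnull.

Definition injraw (j : I) (x : P j) : rawfam := fun i =>
  match idec j i with
  | left e => eq_rect j (fun k => car (pops_of (P k))) x i e
  | right _ => pone
  end.

Lemma good_inj (j : I) (x : P j) : x <> pzero -> good (@injraw j x).
Proof.
  intro Hx. unfold injraw. split.
  - intro i. destruct (idec j i) as [e|n]; [subst; exact Hx | apply p_one_nz].
  - exists [j]. intros i Hi. destruct (idec j i) as [e|n].
    + left; auto.
    + now elim Hi.
Qed.

Definition inj (j : I) (x : P j) : coprod :=
  match excluded_middle_informative (x = pzero) with
  | left _ => None
  | right h => Some (cls (exist _ _ (@good_inj j x h)))
  end.

End Coprod.
Arguments inj {I} P j0 j x.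
Arguments coprod {I} P j0.
Arguments is_morphism {P Q} f.

From Stdlib Require Import List Classical ClassicalEpsilon PeanoNat Permutation Lia
  FunctionalExtensionality PropExtensionality.
Import ListNotations.
Set Implicit Arguments.
Unset Strict Implicit.

(* A class [[(x_i)]] of the coproduct is the product of the [i_j(x_j)] over the
   finitely many j with x_j <> 1, so a morphism out of the coproduct is
   determined by its composites with the [i_j]; this gives uniqueness.  For
   existence, send [[(x_i)]] to the product of the f_i(x_i) over any duplicate
   free list of indices containing the support: this does not depend on the
   list, and changing the representative negates an even number of factors,
   which cancels because - is an involution commuting with multiplication.
   A null triple differing only in the coordinate j goes to f_j of a null
   triple of P_j, scaled by the common product of the remaining factors. *)

Section PastureFacts.
Variable P : pasture.

Lemma p_mulA (a b c : P) : pmul a (pmul b c) = pmul (pmul a b) c.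
Proof. destruct (pasture_ax P) as (H&_). apply H. Qed.

Lemma p_mulC (a b : P) : pmul a b = pmul b a.
Proof. destruct (pasture_ax P) as (_&H&_). apply H. Qed.

Lemma p_mul_one (a : P) : pmul a pone = a.
Proof. rewrite p_mulC. apply p_one_mul. Qed.

Lemma p_zero_mul (a : P) : pmul pzero a = pzero.
Proof. destruct (pasture_ax P) as (_&_&_&H&_). apply H. Qed.

Lemma p_mul_zero (a : P) : pmul a pzero = pzero.
Proof. rewrite p_mulC. apply p_zero_mul. Qed.

Lemma p_negK (a : P) : pneg (pneg a) = a.
Proof. destruct (pasture_ax P) as (_&_&_&_&_&_&_&H&_). apply H. Qed.

Lemma p_neg_zero : pneg (@pzero P) = pzero.
Proof. destruct (pasture_ax P) as (_&_&_&_&_&_&_&_&H&_). exact H. Qed.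

Lemma p_null_perm (a b c : P) : pnull a b c ->
  pnull a c b /\ pnull b a c /\ pnull b c a /\ pnull c a b /\ pnull c b a.
Proof. destruct (pasture_ax P) as (_&_&_&_&_&_&_&_&_&H&_). apply H. Qed.

Lemma p_null_scale (a b c d : P) :
  pnull a b c -> pnull (pmul d a) (pmul d b) (pmul d c).
Proof. destruct (pasture_ax P) as (_&_&_&_&_&_&_&_&_&_&H&_). apply H. Qed.

Lemma p_null_zero (a b : P) : pnull a b pzero <-> a = pneg b.
Proof. destruct (pasture_ax P) as (_&_&_&_&_&_&_&_&_&_&_&H). apply H. Qed.

(* Scale the null triple (-a) + a + 0 by d. *)
Lemma p_mul_neg (d a : P) : pmul d (pneg a) = pneg (pmul d a).
Proof.
  apply p_null_zero. rewrite <- (p_mul_zero d).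
  apply p_null_scale, p_null_zero. reflexivity.
Qed.

Lemma p_neg_mul (a d : P) : pmul (pneg a) d = pneg (pmul a d).
Proof. rewrite p_mulC, p_mul_neg, p_mulC. reflexivity. Qed.

Lemma p_mulCA (a b c : P) : pmul a (pmul b c) = pmul b (pmul a c).
Proof. rewrite !p_mulA, (p_mulC a b). reflexivity. Qed.

Lemma p_mulACA (a b c d : P) :
  pmul (pmul a b) (pmul c d) = pmul (pmul a c) (pmul b d).
Proof. rewrite <- !p_mulA, (p_mulCA b c d). reflexivity. Qed.

Lemma p_iter_neg_even (n : nat) (a : P) : Nat.Even n -> Nat.iter n pneg a = a.
Proof.
  intros [m ->]. induction m as [|m IH]; [reflexivity|].
  replace (2 * S m) with (S (S (2 * m))) by lia.
  simpl. rewrite p_negK. exact IH.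
Qed.

End PastureFacts.

Fixpoint pprod {P : pops} (s : list P) : P :=
  match s with
  | [] => pone
  | a :: s => pmul a (pprod s)
  end.

Lemma pprod_perm (P : pasture) (s s' : list P) : Permutation s s' -> pprod s = pprod s'.
Proof.
  induction 1; simpl; [reflexivity | congruence | apply p_mulCA | congruence].
Qed.

Section MorphismFacts.
Variables P Q : pops.
Variable h : P -> Q.
Hypothesis h_morph : is_morphism h.

Lemma morph_zero : h pzero = pzero.
Proof. destruct h_morph as (H&_). exact H. Qed.

Lemma morph_one : h pone = pone.
Proof. destruct h_morph as (_&H&_). exact H. Qed.

Lemma morph_mul (a b : P) : h (pmul a b) = pmul (h a) (h b).
Proof. destruct h_morph as (_&_&H&_). apply H. Qed.

Lemma morph_neg (a : P) : h (pneg a) = pneg (h a).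
Proof. destruct h_morph as (_&_&_&H&_). apply H. Qed.

Lemma morph_null (a b c : P) : pnull a b c -> pnull (h a) (h b) (h c).
Proof. destruct h_morph as (_&_&_&_&H). apply H. Qed.

Lemma morph_pprod (s : list P) : h (pprod s) = pprod (map h s).
Proof.
  induction s as [|a s IH]; simpl; [apply morph_one|].
  rewrite morph_mul, IH. reflexivity.
Qed.

End MorphismFacts.

Section SymmetricDifference.
Variable A : Type.
Variable dec : forall a b : A, {a = b} + {a <> b}.

Definition memb (S : list A) (a : A) : bool := if in_dec dec a S then true else false.

Lemma memb_spec S a : memb S a = true <-> In a S.
Proof. unfold memb. destruct (in_dec dec a S); split; congruence || tauto. Qed.

Lemma memb_false S a : memb S a = false <-> ~ In a S.
Proof. unfold memb. destruct (in_dec dec a S); split; congruence || tauto. Qed.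

Definition symdiff (S1 S2 : list A) : list A :=
  filter (fun a => negb (memb S2 a)) S1 ++ filter (fun a => negb (memb S1 a)) S2.

Lemma in_symdiff S1 S2 a :
  In a (symdiff S1 S2) <-> (In a S1 /\ ~ In a S2) \/ (In a S2 /\ ~ In a S1).
Proof.
  unfold symdiff. rewrite in_app_iff, !filter_In, !Bool.negb_true_iff, !memb_false.
  reflexivity.
Qed.

Lemma NoDup_symdiff S1 S2 : NoDup S1 -> NoDup S2 -> NoDup (symdiff S1 S2).
Proof.
  intros N1 N2. apply NoDup_app; try apply NoDup_filter; auto.
  intros a Ha Hb. rewrite filter_In, Bool.negb_true_iff, memb_false in Ha, Hb. tauto.
Qed.

(* |S1 Δ S2| = |S1| + |S2| - 2 |S1 ∩ S2|. *)
Lemma Even_symdiff S1 S2 : NoDup S1 -> NoDup S2 ->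
  Nat.Even (length S1) -> Nat.Even (length S2) -> Nat.Even (length (symdiff S1 S2)).
Proof.
  intros N1 N2 [m1 E1] [m2 E2].
  assert (Hcap : length (filter (memb S2) S1) = length (filter (memb S1) S2)).
  { apply Permutation_length, NoDup_Permutation; try apply NoDup_filter; auto.
    intro a. rewrite !filter_In, !memb_spec. tauto. }
  pose proof (filter_length (memb S2) S1). pose proof (filter_length (memb S1) S2).
  unfold symdiff. rewrite length_app.
  exists (m1 + m2 - length (filter (memb S2) S1)). lia.
Qed.

End SymmetricDifference.

Section Coproduct.
Variable I : Type.
Variable P : I -> pasture.
Variable j0 : I.

Definition cover (x : rawfam P) (l : list I) : Prop := forall i, x i <> pone -> In i l.

Lemma common_cover (xs : list (fam P)) (js : list I) :
  exists l, NoDup l /\ (forall x, In x xs -> cover (proj1_sig x) l) /\ incl js l.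
Proof.
  assert (Hl : exists l, (forall x, In x xs -> cover (proj1_sig x) l) /\ incl js l).
  { induction xs as [|x xs [l [Hl Hj]]].
    - exists js. split; [intros _ []|apply incl_refl].
    - destruct (proj2 (proj2_sig x)) as [lx Hx]. exists (lx ++ l). split.
      + intros y [<-|Hy] i Hi; apply in_or_app; [left|right]; auto. exact (Hl y Hy i Hi).
      + apply incl_appr, Hj. }
  destruct Hl as [l [Hl Hj]]. exists (nodup (@idec I) l).
  split; [apply NoDup_nodup|split].
  - intros x Hx i Hi. apply nodup_In. exact (Hl x Hx i Hi).
  - intros i Hi. apply nodup_In. auto.
Qed.

Lemma cover_mul (x y : rawfam P) l :
  cover x l -> cover y l -> cover (fun i => pmul (x i) (y i)) l.
Proof.
  intros Cx Cy i Hi. destruct (classic (x i = pone)) as [E|E]; auto.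
  apply Cy. intros F. apply Hi. rewrite E, F. apply p_one_mul.
Qed.

Lemma fam_eq (x y : fam P) : (forall i, proj1_sig x i = proj1_sig y i) -> x = y.
Proof.
  destruct x as [x Gx], y as [y Gy]; simpl. intros H.
  assert (x = y) by (apply functional_extensionality_dep; exact H).
  subst y. f_equal. apply proof_irrelevance.
Qed.

Lemma fam_equiv_refl (x : fam P) : fam_equiv x x.
Proof.
  exists []. split; [constructor|]. split; [exists 0; reflexivity|].
  split; [intros i []|]. reflexivity.
Qed.

Lemma fam_equiv_sym (x y : fam P) : fam_equiv x y -> fam_equiv y x.
Proof.
  intros (S & N & E & H1 & H2). exists S. split; [|split; [|split]]; auto.
  - intros i Hi. rewrite H1 by exact Hi. symmetry. apply p_negK.
  - intros i Hi. symmetry. auto.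
Qed.

Lemma fam_equiv_trans (x y z : fam P) :
  fam_equiv x y -> fam_equiv y z -> fam_equiv x z.
Proof.
  intros (S1 & N1 & E1 & A1 & B1) (S2 & N2 & E2 & A2 & B2).
  exists (symdiff (@idec I) S1 S2).
  split; [apply NoDup_symdiff; auto|split; [apply Even_symdiff; auto|split]].
  - intros i Hi. apply in_symdiff in Hi.
    destruct Hi as [[H1 H2]|[H1 H2]]; [rewrite A1, B2 | rewrite B1, A2]; auto.
  - intros i Hi. rewrite in_symdiff in Hi.
    destruct (classic (In i S1)), (classic (In i S2)); try tauto.
    + rewrite A1, A2, p_negK; auto.
    + rewrite B1, B2; auto.
Qed.

Lemma fam_equiv_mul_l (u u' v : fam P) :
  fam_equiv u u' -> fam_equiv (fam_mul u v) (fam_mul u' v).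
Proof.
  intros (S & N & E & H1 & H2). exists S. split; [|split; [|split]]; simpl; auto.
  - intros i Hi. rewrite H1 by exact Hi. apply p_neg_mul.
  - intros i Hi. rewrite H2 by exact Hi. reflexivity.
Qed.

Lemma fam_equiv_mul_r (u v v' : fam P) :
  fam_equiv v v' -> fam_equiv (fam_mul u v) (fam_mul u v').
Proof.
  intros (S & N & E & H1 & H2). exists S. split; [|split; [|split]]; simpl; auto.
  - intros i Hi. rewrite H1 by exact Hi. apply p_mul_neg.
  - intros i Hi. rewrite H2 by exact Hi. reflexivity.
Qed.

Lemma class_ext (C D : ncar P) : (forall y, proj1_sig C y <-> proj1_sig D y) -> C = D.
Proof.
  destruct C as [c Hc], D as [d Hd]; simpl. intros H.
  assert (c = d).
  { apply functional_extensionality. intro y. apply propositional_extensionality, H. }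
  subst d. f_equal. apply proof_irrelevance.
Qed.

Lemma rep_spec (C : ncar P) y : proj1_sig C y <-> fam_equiv (rep C) y.
Proof.
  unfold rep. destruct (constructive_indefinite_description _ _) as [x Hx]. apply Hx.
Qed.

Lemma rep_cls (x : fam P) : fam_equiv (rep (cls x)) x.
Proof. apply rep_spec, fam_equiv_refl. Qed.

Lemma cls_rep (C : ncar P) : cls (rep C) = C.
Proof. apply class_ext. intro y. symmetry. apply rep_spec. Qed.

Lemma cls_eq (x y : fam P) : fam_equiv x y -> cls x = cls y.
Proof.
  intros H. apply class_ext. intro z. simpl. split; intros K.
  - exact (fam_equiv_trans (fam_equiv_sym H) K).
  - exact (fam_equiv_trans H K).
Qed.

Lemma cls_mul (x y : fam P) : cmul (Some (cls x)) (Some (cls y)) = Some (cls (fam_mul x y)).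
Proof.
  simpl. f_equal. apply cls_eq.
  apply (fam_equiv_trans (y := fam_mul x (rep (cls y)))).
  - apply fam_equiv_mul_l, rep_cls.
  - apply fam_equiv_mul_r, rep_cls.
Qed.

Lemma injraw_self (j : I) (x : P j) : injraw P j x j = x.
Proof.
  unfold injraw. destruct (idec j j) as [e|n]; [|congruence].
  rewrite (proof_irrelevance _ e eq_refl). reflexivity.
Qed.

Lemma injraw_other (j i : I) (x : P j) : j <> i -> injraw P j x i = pone.
Proof. intros n. unfold injraw. destruct (idec j i); [contradiction|reflexivity]. Qed.

Lemma inj_nonzero (j : I) (x : P j) (Hx : x <> pzero) :
  inj P j0 j x = Some (cls (exist _ _ (good_inj P j Hx))).
Proof.
  unfold inj. destruct (excluded_middle_informative (x = pzero)) as [E|E]; [contradiction|].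
  rewrite (proof_irrelevance _ E Hx). reflexivity.
Qed.

Definition erase_raw (a : I) (x : fam P) : rawfam P :=
  fun i => if idec a i then pone else proj1_sig x i.

Lemma good_erase (a : I) (x : fam P) : good (erase_raw a x).
Proof.
  destruct (proj2_sig x) as [Hnz [l Hl]]. unfold erase_raw. split.
  - intro i. destruct (idec a i); [apply p_one_nz|apply Hnz].
  - exists l. intros i Hi. destruct (idec a i); [congruence|auto].
Qed.

Definition fam_erase (a : I) (x : fam P) : fam P := exist _ _ (good_erase a x).

Lemma fam_mul_inj_erase (a : I) (x : fam P) (Ha : proj1_sig x a <> pzero) :
  fam_mul (exist _ _ (good_inj P a Ha)) (fam_erase a x) = x.
Proof.
  apply fam_eq. intro i. simpl. unfold erase_raw. destruct (idec a i) as [<-|n].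
  - rewrite injraw_self. apply p_mul_one.
  - rewrite injraw_other by exact n. apply p_one_mul.
Qed.

Lemma cls_decompose (l : list I) : NoDup l -> forall x : fam P, cover (proj1_sig x) l ->
  Some (cls x) = pprod (map (fun i => inj P j0 i (proj1_sig x i)) l).
Proof.
  induction 1 as [|a l Na Nl IH]; intros x Cx.
  - assert (Ex : x = fam_one P).
    { apply fam_eq. intro i. apply NNPP. intro Hi. exact (Cx i Hi). }
    subst x. reflexivity.
  - pose proof (proj1 (proj2_sig x) a) as Ha.
    rewrite <- (fam_mul_inj_erase Ha) at 1.
    rewrite <- cls_mul, <- inj_nonzero, IH.
    + simpl. f_equal. f_equal. apply map_ext_in. intros i Hi. simpl. unfold erase_raw.
      destruct (idec a i) as [<-|_]; [contradiction|reflexivity].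
    + intros i Hi. simpl in Hi. unfold erase_raw in Hi.
      destruct (idec a i) as [_|n]; [congruence|].
      destruct (Cx i Hi) as [E|E]; [contradiction|exact E].
Qed.

Lemma coprod_morph_ext (Q : pops) (h1 h2 : coprod P j0 -> Q) :
  is_morphism h1 -> is_morphism h2 ->
  (forall (j : I) (x : P j), h1 (inj P j0 j x) = h2 (inj P j0 j x)) -> h1 = h2.
Proof.
  intros M1 M2 H. apply functional_extensionality. intros [C|].
  - rewrite <- (cls_rep C).
    destruct (common_cover [rep C] []) as (l & Nl & Cl & _).
    rewrite (cls_decompose Nl (Cl _ (or_introl eq_refl))).
    rewrite (morph_pprod M1), (morph_pprod M2), !map_map.
    apply f_equal, map_ext. intro i. apply H.
  - change (h1 pzero = h2 pzero). rewrite (morph_zero M1), (morph_zero M2). reflexivity.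
Qed.

Section Lift.
Variable Q : pasture.
Variable f : forall i : I, P i -> Q.
Arguments f : clear implicits.
Hypothesis f_morph : forall i, is_morphism (f i).

Definition fprod (l : list I) (x : rawfam P) : Q := pprod (map (fun i => f i (x i)) l).

Lemma fprod_ext l (x y : rawfam P) : (forall i, In i l -> x i = y i) -> fprod l x = fprod l y.
Proof.
  intros H. unfold fprod. f_equal. apply map_ext_in. intros i Hi. rewrite H; auto.
Qed.

Lemma fprod_cover l l' (x : rawfam P) :
  NoDup l -> NoDup l' -> cover x l -> cover x l' -> fprod l x = fprod l' x.
Proof.
  intros N N' C C'.
  set (nontriv := fun i => if excluded_middle_informative (x i = pone) then false else true).
  assert (Hnontriv : forall k, fprod k x = fprod (filter nontriv k) x).
  { induction k as [|a k IH]; [reflexivity|]. unfold fprod in *. simpl.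
    unfold nontriv at 1. destruct (excluded_middle_informative (x a = pone)) as [E|E].
    - rewrite E, (morph_one (f_morph a)), p_one_mul. exact IH.
    - simpl. rewrite IH. reflexivity. }
  rewrite (Hnontriv l), (Hnontriv l'). apply pprod_perm, Permutation_map.
  apply NoDup_Permutation; try apply NoDup_filter; auto.
  intro i. rewrite !filter_In. unfold nontriv.
  destruct (excluded_middle_informative (x i = pone)) as [_|n].
  - split; intros [_ F]; discriminate.
  - split; intros _; split; auto.
Qed.

Lemma fprod_mul l (x y : rawfam P) :
  fprod l (fun i => pmul (x i) (y i)) = pmul (fprod l x) (fprod l y).
Proof.
  unfold fprod. induction l as [|a l IH]; simpl; [symmetry; apply p_one_mul|].
  rewrite IH, (morph_mul (f_morph a)). apply p_mulACA.
Qed.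

Lemma fprod_in l j (x : rawfam P) : NoDup l -> In j l ->
  fprod l x = pmul (f j (x j)) (fprod (remove (@idec I) j l) x).
Proof.
  unfold fprod. induction l as [|b l IH]; intros N Hj; [destruct Hj|].
  inversion N as [|? ? Nb Nl]; subst. simpl. destruct (idec j b) as [<-|n].
  - rewrite notin_remove by exact Nb. reflexivity.
  - destruct Hj as [<-|Hj]; [congruence|]. simpl. rewrite IH by assumption.
    apply p_mulCA.
Qed.

Lemma fprod_flip l a (x y : rawfam P) : NoDup l -> In a l -> y a = pneg (x a) ->
  (forall i, i <> a -> y i = x i) -> fprod l y = pneg (fprod l x).
Proof.
  intros N Ha Hya Hy. rewrite (fprod_in y N Ha), (fprod_in x N Ha), Hya.
  rewrite (morph_neg (f_morph a)), p_neg_mul. f_equal. f_equal.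
  apply fprod_ext. intros i Hi. apply Hy, (in_remove _ _ _ _ Hi).
Qed.

Lemma fprod_signs (S : list I) : NoDup S -> forall (x y : rawfam P) l, NoDup l -> incl S l ->
  (forall i, In i S -> x i = pneg (y i)) -> (forall i, ~ In i S -> x i = y i) ->
  fprod l x = Nat.iter (length S) pneg (fprod l y).
Proof.
  induction 1 as [|a S Na NS IH]; intros x y l Nl Sl H1 H2.
  - apply fprod_ext. intros i _. apply H2. intros [].
  - set (y' := (fun i => if idec a i then pneg (y i) else y i) : rawfam P).
    assert (Hflip : fprod l y' = pneg (fprod l y)).
    { apply (fprod_flip Nl (Sl a (or_introl eq_refl))); unfold y'.
      - destruct (idec a a); congruence.
      - intros i n. destruct (idec a i); congruence. }
    cbn [length]. rewrite Nat.iter_succ_r, <- Hflip. apply IH; auto.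
    + intros i Hi. apply Sl. right. exact Hi.
    + intros i Hi. unfold y'. destruct (idec a i) as [<-|_]; [contradiction|].
      apply H1. right. exact Hi.
    + intros i Hi. unfold y'. destruct (idec a i) as [<-|n].
      * apply H1. left. reflexivity.
      * apply H2. intros [E|E]; contradiction.
Qed.

Definition support_list (x : fam P) : list I :=
  proj1_sig (constructive_indefinite_description _ (common_cover [x] [])).

Definition lift_fam (x : fam P) : Q := fprod (support_list x) (proj1_sig x).

Lemma lift_fam_spec (x : fam P) l : NoDup l -> cover (proj1_sig x) l ->
  lift_fam x = fprod l (proj1_sig x).
Proof.
  intros N C. unfold lift_fam, support_list.
  destruct (constructive_indefinite_description _ _) as [l' Hl']. simpl.
  destruct Hl' as (N' & C' & _).
  apply fprod_cover; auto. apply C'. left. reflexivity.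
Qed.

Lemma lift_fam_equiv (x y : fam P) : fam_equiv x y -> lift_fam x = lift_fam y.
Proof.
  intros (S & NS & ES & H1 & H2).
  destruct (common_cover [x; y] S) as (l & Nl & Cl & Sl).
  rewrite (lift_fam_spec Nl (Cl x (or_introl eq_refl))).
  rewrite (lift_fam_spec Nl (Cl y (or_intror (or_introl eq_refl)))).
  rewrite (fprod_signs NS Nl Sl H1 H2). apply p_iter_neg_even, ES.
Qed.

Lemma lift_fam_mul (x y : fam P) : lift_fam (fam_mul x y) = pmul (lift_fam x) (lift_fam y).
Proof.
  destruct (common_cover [x; y] []) as (l & Nl & Cl & _).
  pose proof (Cl x (or_introl eq_refl)) as Cx.
  pose proof (Cl y (or_intror (or_introl eq_refl))) as Cy.
  rewrite (lift_fam_spec Nl Cx), (lift_fam_spec Nl Cy), (lift_fam_spec (x := fam_mul x y) Nl (cover_mul Cx Cy)).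
  apply fprod_mul.
Qed.

Lemma lift_fam_flip (x : fam P) : lift_fam (fam_flip j0 x) = pneg (lift_fam x).
Proof.
  destruct (common_cover [x] [j0]) as (l & Nl & Cl & Jl).
  pose proof (Cl x (or_introl eq_refl)) as Cx.
  assert (Hj0 : In j0 l) by (apply Jl; left; reflexivity).
  assert (Cf : cover (proj1_sig (fam_flip j0 x)) l).
  { intros i Hi. simpl in Hi. unfold flipraw in Hi.
    destruct (idec i j0) as [->|_]; auto. }
  rewrite (lift_fam_spec Nl Cx), (lift_fam_spec Nl Cf).
  apply (fprod_flip Nl Hj0); simpl; unfold flipraw.
  - destruct (idec j0 j0); congruence.
  - intros i n. destruct (idec i j0); congruence.
Qed.

Lemma lift_fam_null (x y z : fam P) (j : I) :
  pnull (proj1_sig x j) (proj1_sig y j) (proj1_sig z j) ->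
  (forall i, i <> j -> proj1_sig x i = proj1_sig y i /\ proj1_sig y i = proj1_sig z i) ->
  pnull (lift_fam x) (lift_fam y) (lift_fam z).
Proof.
  intros Hj Hother.
  destruct (common_cover [x; y; z] [j]) as (l & Nl & Cl & Jl).
  assert (Il : In j l) by (apply Jl; left; reflexivity).
  rewrite (lift_fam_spec Nl (Cl x (or_introl eq_refl))).
  rewrite (lift_fam_spec Nl (Cl y (or_intror (or_introl eq_refl)))).
  rewrite (lift_fam_spec Nl (Cl z (or_intror (or_intror (or_introl eq_refl))))).
  rewrite !(fprod_in _ Nl Il).
  set (rest := fprod (remove (@idec I) j l) (proj1_sig x)).
  assert (Ey : fprod (remove (@idec I) j l) (proj1_sig y) = rest).
  { apply fprod_ext. intros i Hi. symmetry. apply Hother, (in_remove _ _ _ _ Hi). }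
  assert (Ez : fprod (remove (@idec I) j l) (proj1_sig z) = rest).
  { apply fprod_ext. intros i Hi. destruct (Hother i) as [E1 E2].
    - apply (in_remove _ _ _ _ Hi).
    - congruence. }
  rewrite Ey, Ez, !(p_mulC _ rest).
  apply p_null_scale, (morph_null (f_morph j)), Hj.
Qed.

Definition lift (A : coprod P j0) : Q :=
  match A with
  | None => pzero
  | Some C => lift_fam (rep C)
  end.

Lemma lift_mem (C : ncar P) (x : fam P) : proj1_sig C x -> lift (Some C) = lift_fam x.
Proof. intros H. apply lift_fam_equiv, rep_spec, H. Qed.

Lemma lift_cls (x : fam P) : lift (Some (cls x)) = lift_fam x.
Proof. apply lift_mem, fam_equiv_refl. Qed.

Lemma lift_neg (A : coprod P j0) : lift (pneg A) = pneg (lift A).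
Proof.
  destruct A as [C|]; simpl.
  - rewrite <- lift_fam_flip. apply lift_cls.
  - symmetry. apply p_neg_zero.
Qed.

Lemma lift_null_degenerate (A B C : coprod P j0) :
  (C = None /\ A = cneg j0 B) \/ (B = None /\ A = cneg j0 C) \/ (A = None /\ B = cneg j0 C) ->
  pnull (lift A) (lift B) (lift C).
Proof.
  assert (Hnull : forall a : Q, pnull (pneg a) a pzero) by (intro; apply p_null_zero; reflexivity).
  intros [[-> ->]|[[-> ->]|[-> ->]]]; change (cneg j0) with (@pneg (coprod P j0));
    rewrite lift_neg; simpl lift.
  - apply Hnull.
  - pose proof (p_null_perm (Hnull (lift C))). tauto.
  - pose proof (p_null_perm (Hnull (lift C))). tauto.
Qed.

Lemma lift_morphism : is_morphism lift.
Proof.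
  split; [reflexivity|split; [|split; [|split]]].
  - change (lift (Some (cls (fam_one P))) = pone). rewrite lift_cls.
    rewrite (lift_fam_spec (l := [])); [reflexivity|constructor|].
    intros i H. contradiction.
  - intros [a|] [b|].
    + rewrite <- (cls_rep a), <- (cls_rep b).
      change (lift (cmul (Some (cls (rep a))) (Some (cls (rep b)))) =
              pmul (lift (Some (cls (rep a)))) (lift (Some (cls (rep b))))).
      rewrite cls_mul, !lift_cls. apply lift_fam_mul.
    + symmetry. apply p_mul_zero.
    + symmetry. apply p_zero_mul.
    + symmetry. apply p_zero_mul.
  - apply lift_neg.
  - intros [a|] [b|] [c|] H; try (apply lift_null_degenerate; exact H).
    destruct H as (x & y & z & Hx & Hy & Hz & j & Hj & Hother).
    rewrite (lift_mem Hx), (lift_mem Hy), (lift_mem Hz).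
    exact (lift_fam_null Hj Hother).
Qed.

Lemma lift_inj (j : I) (x : P j) : lift (inj P j0 j x) = f j x.
Proof.
  destruct (excluded_middle_informative (x = pzero)) as [->|Hx].
  - unfold inj. destruct (excluded_middle_informative _) as [_|n]; [|congruence].
    symmetry. apply (morph_zero (f_morph j)).
  - rewrite (inj_nonzero Hx), lift_cls, (lift_fam_spec (l := [j])).
    + unfold fprod. simpl. rewrite injraw_self. apply p_mul_one.
    + repeat constructor. intros [].
    + intros i Hi. simpl in Hi. destruct (idec j i) as [e|n].
      * left. exact e.
      * rewrite injraw_other in Hi by exact n. contradiction.
Qed.

End Lift.

End Coproduct.

Theorem lemma7p4 (I : Type) (P : I -> pasture) (j0 : I) (Q : pasture)
    (f : forall i : I, P i -> Q) :
  (forall i : I, is_morphism (f i)) ->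
  exists! g : coprod P j0 -> Q,
    is_morphism g /\ (forall (j : I) (x : P j), f j x = g (inj P j0 j x)).
Proof.
  intros f_morph. exists (lift f). split.
  - split; [exact (lift_morphism j0 f_morph)|].
    intros j x. symmetry. exact (lift_inj j0 f_morph x).
  - intros h [h_morph h_inj].
    apply coprod_morph_ext; [exact (lift_morphism j0 f_morph)|exact h_morph|].
    intros j x. rewrite (lift_inj j0 f_morph). apply h_inj.
Qed.
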